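(* Let $q$ be a query with sensitivity $\Delta q>0$ and let $b>0$ be a random scale parameter with $M_{1/b}(t)=\mathbb E[e^{t/b}]$. Consider the R$^2$DP Laplace mechanism $\mathcal M_q(d,b)=q(d)+\mathrm{Lap}(b)$. For every $\epsilon\ge \ln\big[\mathbb E_{1/b}(e^{\epsilon(b)})\big]=\ln M_{1/b}(\Delta q)$, where $\epsilon(b)=\Delta q/b$, and every $\gamma\ge0$, the usefulness of the R$^2$DP mechanism is at most that of the $\epsilon$-differentially private Laplace mechanism with scale $\Delta q/\epsilon$: $$\mathbb P(|\mathcal M_q(d,b)-q(d)|\le\gamma)=1-M_{1/b}(-\gamma)\ \le\ 1-e^{-\gamma\epsilon/\Delta q}.$$ Equivalently, for an R$^2$DP mechanism to improve on the usefulness of the baseline Laplace mechanism with the same privacy level, it is necessary that $$e^{\epsilon}=\frac{\mathbb E(1/b)}{M'_{1/b}(-\Delta q)}<M_{1/b}(\Delta q).$$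
   Context: $\mathrm{Lap}(b)$ is the zero-mean Laplace distribution with density $\frac{1}{2b}e^{-|x|/b}$. In an R$^2$DP Laplace mechanism the scale $b$ is random (independent of the data) and, conditionally on $b$, $\mathrm{Lap}(b)$ noise is added to $q(d)$. $\Delta q=\max|q(d)-q(d')|$ over datasets differing in one individual's data. The baseline Laplace mechanism with scale $\Delta q/\epsilon$ is $\epsilon$-differentially private and has usefulness $1-e^{-\gamma\epsilon/\Delta q}$ at error bound $\gamma$. The quantity $\mathbb E(1/b)/M'_{1/b}(-\Delta q)$ is $e^\epsilon$ for the differential-privacy level $\epsilon$ guaranteed for the R$^2$DP Laplace mechanism, where $M'_{1/b}(t)=\mathbb E[\frac1b e^{t/b}]$. *)

From HB Require Import structures.
From mathcomp Require Import all_boot all_order all_algebra.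
From mathcomp Require Import all_classical all_reals all_analysis.
Set Implicit Arguments. Unset Strict Implicit. Unset Printing Implicit Defensive.
Import Order.TTheory GRing.Theory Num.Theory.
Local Open Scope ring_scope.
Local Open Scope classical_set_scope.

Definition laplace_pdf (R : realType) (s x : R) : R :=
  (2 * s)^-1 * expR (- `|x| / s).

Definition mgf_inv (d : measure_display) (T : measurableType d) (R : realType)
  (P : probability T R) (b : T -> R) (t : R) : \bar R :=
  (\int[P]_w (expR (t / b w))%:E)%E.

(* Usefulness of the R^2DP Laplace mechanism at error bound g:
   P(|M_q(d,b) - q(d)| <= g) where, conditionally on b, the noise
   M_q(d,b) - q(d) is Lap(b); i.e. the mixture
   E_b[ integral_{[-g,g]} laplace_pdf b x dx ]. *)
Definition r2dp_usefulness (d : measure_display) (T : measurableType d)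
  (R : realType) (P : probability T R) (b : T -> R) (g : R) : \bar R :=
  (\int[P]_w (\int[@lebesgue_measure R]_(x in `[(- g)%R, g]) (laplace_pdf (b w) x)%:E))%E.

From HB Require Import structures.
From mathcomp Require Import all_boot all_order all_algebra.
From mathcomp Require Import all_classical all_reals all_analysis.
From mathcomp Require Import ring measurable_realfun.
Import Order.TTheory GRing.Theory Num.Theory.
Import numFieldTopology.Exports.
Local Open Scope ring_scope.
Local Open Scope classical_set_scope.

(* Jensen's inequality for exp (integrate the tangent line of exp at the
   mean), applied to t/b at t = Dq and t = -g, gives
   exp(Dq E[1/b]) <= M_{1/b}(Dq) <= e^eps and M_{1/b}(-g) >= exp(-g E[1/b]);
   hence E[1/b] <= eps/Dq and 1 - M_{1/b}(-g) <= 1 - exp(-g eps/Dq).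
   The second claim is the contrapositive of the first. *)

Section laplace_integral.
Context {R : realType}.

Lemma continuous_scaled_expR (k c : R) :
  continuous (fun y : R => k * expR (c * y)).
Proof.
move=> x; apply: (@continuousM _ R^o (fun=> k) (fun y => expR (c * y))).
  exact: cst_continuous.
apply: continuous_comp; last exact: continuous_expR.
by apply: continuousM => //; exact: cst_continuous.
Qed.

Lemma is_derive_scaled_expR (k c x : R) : c != 0 ->
  is_derive x 1 (fun y : R => k / c * expR (c * y)) (k * expR (c * x)).
Proof.
move=> c0.
have dlin : is_derive x 1 (fun y : R => c * y) c.
  have := is_deriveZ c (is_derive_id x 1).
  have -> : c \*: id = (fun y : R => c * y) by apply/funext.
  by rewrite /GRing.scale /= mulr1.
have dexp : is_derive x 1 (expR \o (fun y : R => c * y)) (expR (c * x) * c).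
  exact: is_derive1_comp.
have := is_deriveZ (k / c) dexp.
have -> : (k / c) \*: (expR \o (fun y : R => c * y)) =
          (fun y : R => k / c * expR (c * y)) by apply/funext.
by move/is_derive_eq; apply; rewrite /GRing.scale /=; field.
Qed.

Lemma integral_scaled_expR (k c x y : R) : c != 0 -> x < y ->
  (\int[lebesgue_measure]_(z in `[x, y]) (k * expR (c * z))%:E =
   ((k / c) * (expR (c * y) - expR (c * x)))%:E)%E.
Proof.
move=> c0 xy; rewrite mulrBr EFinB.
have cF := continuous_scaled_expR (k / c) c.
apply: (@continuous_FTC2 _ _ (fun z : R => k / c * expR (c * z))) => //.
- exact/continuous_subspaceT/continuous_scaled_expR.
- split.
  + by move=> z _; have [] := is_derive_scaled_expR k c z c0.
  + exact/cvg_at_right_filter/cF.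
  + exact/cvg_at_left_filter/cF.
- move=> z _; rewrite derive1E.
  exact: (@derive_val _ _ _ _ _ _ _ (is_derive_scaled_expR k c z c0)).
Qed.

Lemma measurable_laplace_pdf (s : R) : measurable_fun setT (laplace_pdf s).
Proof.
apply: measurable_funM => //; apply: measurableT_comp => //.
by apply: measurable_funM => //; apply: measurableT_comp.
Qed.

Lemma laplace_pdf_integral_itv (s g : R) : 0 < s -> 0 <= g ->
  (\int[lebesgue_measure]_(x in `[(- g)%R, g]) (laplace_pdf s x)%:E =
   (1 - expR (- g / s))%:E)%E.
Proof.
move=> s0; rewrite le_eqVlt => /predU1P[<-|g0].
  by rewrite oppr0 set_itv1 integral_set1 mul0r expR0 subrr.
have mpdf : measurable_fun setT (EFin \o laplace_pdf s).
  by apply/measurable_EFinP; exact: measurable_laplace_pdf.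
rewrite (@itv_bndbnd_setU _ _ _ (BRight 0)); last 2 first.
- by rewrite bnd_simp oppr_le0 ltW.
- by rewrite bnd_simp ltW.
rewrite integral_setU //; last first.
- apply/disj_setPS => x [] /=; rewrite !in_itv /= => /andP[_ x0] /andP[x0' _].
  by move: (lt_le_trans x0' x0); rewrite ltxx.
- exact: measurable_funTS.
rewrite integral_itv_obnd_cbnd; last exact: measurable_funTS.
have -> : (\int[lebesgue_measure]_(x in `[(- g)%R, 0%R]) (laplace_pdf s x)%:E =
    \int[lebesgue_measure]_(x in `[(- g)%R, 0%R]) ((2 * s)^-1 * expR (s^-1 * x))%:E)%E.
  apply: eq_integral => x; rewrite inE /= in_itv /= => /andP[_ x0].
  by rewrite /laplace_pdf ler0_norm // opprK [x / s]mulrC.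
have -> : (\int[lebesgue_measure]_(x in `[0%R, g]) (laplace_pdf s x)%:E =
    \int[lebesgue_measure]_(x in `[0%R, g]) ((2 * s)^-1 * expR (- s^-1 * x))%:E)%E.
  apply: eq_integral => x; rewrite inE /= in_itv /= => /andP[x0 _].
  by rewrite /laplace_pdf ger0_norm // !mulNr [x / s]mulrC.
have s0' : s^-1 != 0 by rewrite invr_eq0 gt_eqF.
rewrite integral_scaled_expR ?oppr_lt0 // integral_scaled_expR ?oppr_eq0 //.
rewrite -EFinD !mulr0 expR0 [s^-1 * - g]mulrC !mulNr [s^-1 * g]mulrC -!mulNr.
congr (_%:E); set e := expR _; field; exact: lt0r_neq0.
Qed.

End laplace_integral.

Lemma expR_tangent_le {R : realType} (a y : R) : expR a * (1 - a + y) <= expR y.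
Proof.
have -> : expR y = expR a * expR (y - a) by rewrite -expRD addrC subrK.
by rewrite ler_pM2l ?expR_gt0 // addrAC -addrA; exact: expR_ge1Dx.
Qed.

Section expR_jensen.
Context {d : measure_display} {T : measurableType d} {R : realType}.
Variable P : probability T R.

Lemma probability_Rintegral_cstD (c : R) (X : T -> R) :
  P.-integrable setT (EFin \o X) ->
  \int[P]_w (c + X w) = c + \int[P]_w X w.
Proof.
move=> iX; rewrite RintegralD //; last exact: finite_measure_integrable_cst.
have P1 : fine (P setT) = 1 by rewrite probability_setT.
by rewrite Rintegral_cst // P1 mulr1.
Qed.

Lemma expR_Rintegral_le (X : T -> R) :
  P.-integrable setT (EFin \o X) -> P.-integrable setT (EFin \o (expR \o X)) ->
  expR (\int[P]_w X w) <= \int[P]_w expR (X w).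
Proof.
move=> iX iexpX; set a := \int[P]_w X w.
have iaff : P.-integrable setT (EFin \o (fun w => (1 - a) + X w)).
  have := integrableD measurableT (finite_measure_integrable_cst P (1 - a) measurableT) iX.
  by apply: eq_integrable => // w _ /=; rewrite EFinD.
have iline : P.-integrable setT (EFin \o (fun w => expR a * ((1 - a) + X w))).
  have := integrableZl measurableT (expR a) iaff.
  by apply: eq_integrable => // w _ /=; rewrite EFinM.
have line_mean : \int[P]_w (expR a * ((1 - a) + X w)) = expR a.
  by rewrite RintegralZl // probability_Rintegral_cstD // subrK mulr1.
rewrite -[L in L <= _]line_mean; apply: le_Rintegral => // w _.
exact: expR_tangent_le.
Qed.

End expR_jensen.

Section r2dp_laplace.
Context {d : measure_display} {T : measurableType d} {R : realType}.
Variables (P : probability T R) (b : T -> R).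
Hypotheses (b_meas : measurable_fun setT b) (b_pos : forall w, 0 < b w).

Lemma measurable_inv_scale : measurable_fun setT (fun w => (b w)^-1).
Proof.
apply: (eq_measurable_fun (fun w => expR (- ln (b w)))).
  by move=> w _; rewrite expRN lnK // posrE b_pos.
apply: measurableT_comp; first exact: measurable_expR.
by apply: measurableT_comp => //; apply: measurableT_comp.
Qed.

Lemma measurable_expR_div_scale (t : R) :
  measurable_fun setT (fun w => expR (t / b w)).
Proof.
apply: measurableT_comp; first exact: measurable_expR.
exact/measurable_funM/measurable_inv_scale.
Qed.

Lemma mgf_inv_ge0 (t : R) : (0 <= mgf_inv P b t)%E.
Proof. by apply: integral_ge0 => w _; rewrite lee_fin expR_ge0. Qed.

Lemma mgf_inv_ge1 (t : R) : 0 <= t -> (1 <= mgf_inv P b t)%E.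
Proof.
move=> t0; have -> : (1 = \int[P]_w (cst 1 w))%E.
  by rewrite integral_cst // mul1e; apply/esym; exact: probability_setT.
apply: ge0_le_integral => //.
- by apply/measurable_EFinP; exact: measurable_expR_div_scale.
- by move=> w _; rewrite lee_fin -expR0 ler_expR divr_ge0 // ltW.
Qed.

Lemma integrable_mgf_inv (t : R) : mgf_inv P b t \is a fin_num ->
  P.-integrable setT (EFin \o (fun w => expR (t / b w))).
Proof.
move=> Mfin; apply/integrableP; split.
  by apply/measurable_EFinP; exact: measurable_expR_div_scale.
under eq_integral do rewrite /= ger0_norm ?expR_ge0 //.
by rewrite -ge0_fin_numE // mgf_inv_ge0.
Qed.

Lemma mgf_inv_nonpos_fin_num (t : R) : t <= 0 -> mgf_inv P b t \is a fin_num.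
Proof.
move=> t0; apply: integrable_fin_num => //.
apply: measurable_bounded_integrable => //.
- exact: le_lt_trans (probability_le1 P measurableT) (ltry _).
- exact: measurable_expR_div_scale.
- exists 1; split => // M M1 w _; apply: le_trans (ltW M1).
  rewrite ger0_norm ?expR_ge0 // -expR0 ler_expR.
  by rewrite mulr_le0_ge0 // invr_ge0 ltW.
Qed.

Lemma integrable_inv_scale (Dq : R) : 0 < Dq -> mgf_inv P b Dq \is a fin_num ->
  P.-integrable setT (EFin \o (fun w => (b w)^-1)).
Proof.
move=> Dq0 Mfin.
have := integrableZl measurableT Dq^-1 (integrable_mgf_inv Dq Mfin).
apply: le_integrable => //.
- by apply/measurable_EFinP; exact: measurable_inv_scale.
move=> w _ /=; have bw0 := b_pos w.
rewrite lee_fin !ger0_norm ?mulr_ge0 ?invr_ge0 ?expR_ge0 ?(ltW Dq0) ?(ltW bw0) //.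
rewrite -(ler_pM2l Dq0) mulrA mulfV ?gt_eqF // mul1r.
by apply: le_trans (expR_ge1Dx _); rewrite lerDr.
Qed.

Lemma expR_mean_inv_scale_le_mgf (t : R) :
  P.-integrable setT (EFin \o (fun w => (b w)^-1)) ->
  mgf_inv P b t \is a fin_num ->
  expR (t * \int[P]_w (b w)^-1) <= fine (mgf_inv P b t).
Proof.
move=> iinv Mfin; rewrite -RintegralZl //.
apply: expR_Rintegral_le; last exact: integrable_mgf_inv.
have := integrableZl measurableT t iinv.
by apply: eq_integrable => // w _ /=; rewrite EFinM.
Qed.

Lemma mean_inv_scale_le_ln_mgf (Dq : R) : 0 < Dq ->
  mgf_inv P b Dq \is a fin_num ->
  Dq * \int[P]_w (b w)^-1 <= ln (fine (mgf_inv P b Dq)).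
Proof.
move=> Dq0 Mfin.
have le_expM := expR_mean_inv_scale_le_mgf Dq (integrable_inv_scale Dq Dq0 Mfin) Mfin.
rewrite -[leLHS]expRK ler_ln // posrE ?expR_gt0 //.
exact: lt_le_trans (expR_gt0 _) le_expM.
Qed.

Lemma r2dp_usefulnessE (g : R) : 0 <= g ->
  r2dp_usefulness P b g = (1 - mgf_inv P b (- g))%E.
Proof.
move=> g0; rewrite /r2dp_usefulness /mgf_inv.
under eq_integral do rewrite laplace_pdf_integral_itv //.
rewrite integralB_EFin //; last first.
- by apply/integrable_mgf_inv/mgf_inv_nonpos_fin_num; rewrite oppr_le0.
- exact: finite_measure_integrable_cst.
by rewrite integral_cst // mul1e; congr (_ - _)%E; exact: probability_setT.
Qed.

Lemma r2dp_usefulness_le_laplace (Dq eps g : R) : 0 < Dq ->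
  mgf_inv P b Dq \is a fin_num -> ln (fine (mgf_inv P b Dq)) <= eps -> 0 <= g ->
  (r2dp_usefulness P b g <= (1 - expR (- (g * eps) / Dq))%:E)%E.
Proof.
move=> Dq0 Mfin Meps g0.
have Mgfin : mgf_inv P b (- g) \is a fin_num by rewrite mgf_inv_nonpos_fin_num ?oppr_le0.
rewrite r2dp_usefulnessE // -(fineK Mgfin) -EFinB lee_fin lerD2l lerN2.
have iinv := integrable_inv_scale Dq Dq0 Mfin.
apply: le_trans (expR_mean_inv_scale_le_mgf (- g) iinv Mgfin); rewrite ler_expR.
have mean_le : \int[P]_w (b w)^-1 <= eps / Dq.
  by rewrite ler_pdivlMr // mulrC (le_trans (mean_inv_scale_le_ln_mgf Dq Dq0 Mfin)).
by rewrite !mulNr lerN2 -mulrA ler_wpM2l.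
Qed.

End r2dp_laplace.

Theorem theorem4p2 (d : measure_display) (T : measurableType d) (R : realType)
  (P : probability T R) (b : T -> R) (Dq : R)
  (b_meas : measurable_fun setT b) (b_pos : forall w, 0 < b w) (Dq_pos : 0 < Dq) :
  (* main claim *)
  (forall eps : R,
     mgf_inv P b Dq \is a fin_num -> ln (fine (mgf_inv P b Dq)) <= eps ->
     forall g : R, 0 <= g ->
       r2dp_usefulness P b g = (1 - mgf_inv P b (- g))%E /\
       (r2dp_usefulness P b g <= (1 - expR (- (g * eps) / Dq))%:E)%E)
  /\
  (* equivalent form: improving on the baseline at level eps forces e^eps < M(Dq) *)
  (forall eps : R,
     (exists g : R, 0 <= g /\
        ((1 - expR (- (g * eps) / Dq))%:E < r2dp_usefulness P b g)%E) ->
     ((expR eps)%:E < mgf_inv P b Dq)%E).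
Proof.
split=> [eps Mfin Meps g g0 | eps [g [g0 improves]]].
  split; first exact: r2dp_usefulnessE.
  exact: r2dp_usefulness_le_laplace.
have [Mfin|Minf] := boolP (mgf_inv P b Dq \is a fin_num); last first.
  move: Minf; rewrite ge0_fin_numE ?mgf_inv_ge0 // -leNgt leye_eq => /eqP ->.
  exact: ltry.
rewrite ltNge; apply/negP => M_le_expR.
have M_ge1 := mgf_inv_ge1 P b b_meas b_pos Dq (ltW Dq_pos).
have M_pos : 0 < fine (mgf_inv P b Dq).
  by rewrite -lte_fin fineK // (lt_le_trans _ M_ge1).
have Meps : ln (fine (mgf_inv P b Dq)) <= eps.
  by rewrite -[leRHS]expRK ler_ln ?posrE ?expR_gt0 // -lee_fin fineK.
move: improves; rewrite ltNge.
by rewrite (r2dp_usefulness_le_laplace _ _ b_meas b_pos _ _ _ Dq_pos Mfin Meps g0).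
Qed.
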